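(* If $\overline{\mathcal{G}}$ is compact, then for every $\epsilon>0$ the graph $\mathcal{G}_\epsilon$ is a finite graph.
   Context: $\mathcal{G}$ is a connected, locally finite metric graph with countable vertex set and countable edge set. Each edge has a positive length and is identified with an interval. $\mathcal{G}$ carries the geodesic distance $d$ (infimum of lengths of paths), and $\overline{\mathcal{G}}$ is its metric completion. A designated set of vertices, containing all vertices of degree $1$, forms the boundary vertices. $\mathcal{G}_{int}$ is $\mathcal{G}$ minus the boundary vertices, and $\partial\overline{\mathcal{G}}=\overline{\mathcal{G}}\setminus\mathcal{G}_{int}$. For $\epsilon>0$, $\mathcal{G}_\epsilon$ is the subgraph of $\mathcal{G}$ defined as follows. Its edges are the closed edges of $\mathcal{G}$ containing a point $x$ with $d(x,\partial\overline{\mathcal{G}})\ge\epsilon$. Its vertices are the vertices of $\mathcal{G}$ on which such edges are incident. *)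

From HB Require Import structures.
From mathcomp Require Import all_boot all_order all_algebra.
From mathcomp Require Import all_classical all_reals all_analysis.
Set Implicit Arguments. Unset Strict Implicit. Unset Printing Implicit Defensive.
Import Order.TTheory GRing.Theory Num.Theory numFieldNormedType.Exports.
Local Open Scope classical_set_scope.
Local Open Scope ring_scope.

(* Combinatorial walks in a multigraph with edge endpoints src/tgt: a walk is a
   list of (edge, orientation); orientation true = traversed from src to tgt. *)
Fixpoint walk_ok {V E : Type} (src tgt : E -> V) (u w : V) (s : seq (E * bool))
  : Prop :=
  match s with
  | [::] => u = w
  | (e, b) :: s' =>
      (if b then src e else tgt e) = u /\ walk_ok src tgt (if b then tgt e else src e) w s'
  end.

Definition degree_one {V E : Type} (src tgt : E -> V) (v : V) : Prop :=
  exists e, (src e = v \/ tgt e = v) /\ src e <> tgt e /\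
    forall e', (src e' = v \/ tgt e' = v) -> e' = e.

Record metric_graph (R : realType) := MetricGraph {
  mg_V : countType;
  mg_E : countType;
  mg_src : mg_E -> mg_V;
  mg_tgt : mg_E -> mg_V;
  mg_len : mg_E -> R;
  mg_bnd : set mg_V;
  mg_len_pos : forall e, 0 < mg_len e;
  mg_locfin : forall v, finite_set [set e | mg_src e = v \/ mg_tgt e = v];
  mg_connected : forall u w, exists s, walk_ok mg_src mg_tgt u w s;
  mg_deg1_bnd : forall v, degree_one mg_src mg_tgt v -> mg_bnd v }.

(* Points of the metric graph: a vertex, or an interior point of an edge e at
   distance t from src e (edge e identified with [0, len e]). *)
Inductive gpoint (V E R : Type) := GV of V | GE of E & R.
Arguments GV {V E R}. Arguments GE {V E R}.

Unset Implicit Arguments.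
Section MG.
Context {R : realType} (G : metric_graph R).
Notation V := (mg_V G). Notation E := (mg_E G).
Notation src := (@mg_src _ G). Notation tgt := (@mg_tgt _ G). Notation len := (@mg_len _ G).
Notation pt := (gpoint V E R).

Definition gvalid (p : pt) : Prop :=
  match p with GV _ => True | GE e t => 0 < t < len e end.

(* ways to leave a point towards a vertex, with the cost *)
Definition gexits (p : pt) : seq (V * R) :=
  match p with
  | GV v => [:: (v, 0)]
  | GE e t => [:: (src e, t); (tgt e, len e - t)]
  end.

Definition walk_len (s : seq (E * bool)) : R := \sum_(x <- s) len x.1.

Definition path_lengths (x y : pt) : set R :=
  [set l | (exists a b s, a \in gexits x /\ b \in gexits y /\
               walk_ok src tgt a.1 b.1 s /\ l = a.2 + walk_len s + b.2)
        \/ (exists e t t', x = GE e t /\ y = GE e t' /\ l = `|t - t'|)].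

Definition gdist (x y : pt) : R := inf (path_lengths x y).

(* The metric completion: Cauchy sequences of points with the pseudo-distance
   cdist u w = lim d(u n, w n). *)
Definition gcauchy (u : nat -> pt) : Prop :=
  (forall n, gvalid (u n)) /\
  forall eps : R, 0 < eps -> exists N, forall m n,
      (N <= m)%N -> (N <= n)%N -> gdist (u m) (u n) < eps.

Definition cdist (u w : nat -> pt) : R := limn (fun n => gdist (u n) (w n) : R^o).

Definition gint (p : pt) : Prop :=
  gvalid p /\ match p with GV v => ~ @mg_bnd _ G v | GE _ _ => True end.

Definition cboundary : set (nat -> pt) :=
  [set u | gcauchy u /\ ~ exists p, gint p /\ cdist u (fun _ => p) = 0].

(* d(x, boundary) >= eps  (inf over the boundary, +oo if empty) *)
Definition dist_bnd_ge (x : pt) (eps : R) : Prop :=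
  forall u, cboundary u -> eps <= cdist (fun _ => x) u.

Definition copen (O : set (nat -> pt)) : Prop :=
  forall u, gcauchy u -> O u -> exists2 r : R, 0 < r &
    forall w, gcauchy w -> cdist u w < r -> O w.

Definition completion_compact : Prop :=
  forall (I : Type) (O : I -> set (nat -> pt)),
    (forall i, copen (O i)) ->
    (forall u, gcauchy u -> exists i, O i u) ->
    exists J : set I, finite_set J /\
      forall u, gcauchy u -> exists i, J i /\ O i u.

Definition on_closed_edge (e : E) (p : pt) : Prop :=
  p = GV (src e) \/ p = GV (tgt e) \/ exists t, p = GE e t /\ 0 < t < len e.

Definition eps_edges (eps : R) : set E :=
  [set e | exists x, on_closed_edge e x /\ dist_bnd_ge x eps].

Definition eps_vertices (eps : R) : set V :=
  [set v | exists e, eps_edges eps e /\ (src e = v \/ tgt e = v)].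

End MG.

From HB Require Import structures.
From mathcomp Require Import all_boot all_order all_algebra.
From mathcomp Require Import all_classical all_reals all_analysis.
From mathcomp Require Import lra.
Import Order.TTheory GRing.Theory Num.Theory.
Local Open Scope classical_set_scope.
Local Open Scope ring_scope.

(* Every point p of the graph has a radius r_p > 0 such that the ball of
   radius r_p around p meets only finitely many closed edges (local
   finiteness).  The balls around the points of G_int, together with the
   open eps-neighbourhood of the boundary, cover the completion; by
   compactness finitely many of them do.  A point at distance >= eps from the
   boundary lies in one of the finitely many balls, so only finitely many
   closed edges contain such a point. *)

Section MetricGraph.
Context {R : realType} {G : metric_graph R}.
Local Notation V := (mg_V G).
Local Notation E := (mg_E G).
Local Notation src := (@mg_src _ G).
Local Notation tgt := (@mg_tgt _ G).
Local Notation len := (@mg_len _ G).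
Local Notation pt := (gpoint V E R).
Local Notation walk_ok := (walk_ok src tgt).
Local Notation walk_len := (walk_len G).
Local Notation gvalid := (gvalid G).
Local Notation gexits := (gexits G).
Local Notation path_lengths := (path_lengths G).
Local Notation gdist := (gdist G).

Lemma walk_ok_cat u w z s1 s2 :
  walk_ok u w s1 -> walk_ok w z s2 -> walk_ok u z (s1 ++ s2).
Proof.
elim: s1 u => [|[e b] s IH] u /=; first by move=> ->.
by move=> [-> ws] ws2; split => //; apply: IH.
Qed.

Lemma walk_len_nil : walk_len [::] = 0.
Proof. by rewrite /walk_len big_nil. Qed.

Lemma walk_len_cons x s : walk_len (x :: s) = len x.1 + walk_len s.
Proof. by rewrite /walk_len big_cons. Qed.

Lemma walk_len_cat s1 s2 : walk_len (s1 ++ s2) = walk_len s1 + walk_len s2.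
Proof. by rewrite /walk_len big_cat. Qed.

Lemma walk_len_ge0 s : 0 <= walk_len s.
Proof. by rewrite /walk_len sumr_ge0 // => x _; rewrite ltW // mg_len_pos. Qed.

Fixpoint walk_rev (s : seq (E * bool)) : seq (E * bool) :=
  if s is x :: s' then walk_rev s' ++ [:: (x.1, ~~ x.2)] else [::].

Lemma walk_ok_rev u w s : walk_ok u w s -> walk_ok w u (walk_rev s).
Proof.
elim: s u => [|[e b] s IH] u /=; first by move=> ->.
move=> [eu ws]; apply: walk_ok_cat (IH _ ws) _.
by case: b eu ws => /= eu _; split.
Qed.

Lemma walk_len_rev s : walk_len (walk_rev s) = walk_len s.
Proof.
elim: s => [|x s IH] //=.
by rewrite walk_len_cat IH !walk_len_cons walk_len_nil addr0 addrC.
Qed.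

Lemma gexits_ge0 {x a} : gvalid x -> a \in gexits x -> 0 <= a.2.
Proof.
case: x => [v|e t] /=; first by rewrite inE => _ /eqP ->.
move=> /andP[t0 tl]; rewrite !inE => /orP[] /eqP -> /=; first exact: ltW.
by rewrite subr_ge0 ltW.
Qed.

Lemma gexits_exists x : exists a, a \in gexits x.
Proof.
by case: x => [v|e t]; [exists (v, 0)|exists (src e, t)]; rewrite !inE eqxx.
Qed.

Lemma gexits_walk {y a b} : gvalid y -> a \in gexits y -> b \in gexits y ->
  exists2 s, walk_ok a.1 b.1 s & walk_len s <= a.2 + b.2.
Proof.
case: y => [v|e t] /=.
  move=> _; rewrite !inE => /eqP -> /eqP ->.
  by exists [::]; rewrite // walk_len_nil addr0.
move=> /andP[t0 tl]; rewrite !inE => /orP[] /eqP -> /orP[] /eqP -> /=.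
- by exists [::]; rewrite // walk_len_nil; lra.
- by exists [:: (e, true)]; rewrite // walk_len_cons walk_len_nil /=; lra.
- by exists [:: (e, false)]; rewrite // walk_len_cons walk_len_nil /=; lra.
- by exists [::]; rewrite // walk_len_nil; lra.
Qed.

Lemma gexits_shift {e t} t' {a} : a \in gexits (GE e t) ->
  exists2 b, b \in gexits (GE e t') & b.1 = a.1 /\ b.2 <= a.2 + `|t - t'|.
Proof.
have := ler_norm (t - t'); have := ler_norm (t' - t); rewrite distrC.
rewrite !inE => h1 h2 /orP[] /eqP -> /=.
  by exists (src e, t'); rewrite ?inE ?eqxx //=; split => //; lra.
by exists (tgt e, len e - t'); rewrite ?inE ?eqxx ?orbT //=; split => //; lra.
Qed.

Lemma path_lengths_ge0 x y l :
  gvalid x -> gvalid y -> path_lengths x y l -> 0 <= l.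
Proof.
move=> vx vy [[a [b [s [ax [xy [_ ->]]]]]]|[e [t [t' [_ [_ ->]]]]]] //.
by rewrite !addr_ge0 ?walk_len_ge0 ?(gexits_ge0 vx ax) ?(gexits_ge0 vy xy).
Qed.

Lemma path_lengths_nonempty x y : nonempty (path_lengths x y).
Proof.
have [a ax] := gexits_exists x; have [b xy] := gexits_exists y.
have [s ws] := mg_connected a.1 b.1.
by exists (a.2 + walk_len s + b.2); left; exists a, b, s.
Qed.

Lemma path_lengthsC x y l : path_lengths x y l -> path_lengths y x l.
Proof.
move=> [[a [b [s [ax [xy [ws ->]]]]]]|[e [t [t' [-> [-> ->]]]]]].
  left; exists b, a, (walk_rev s); do 2!split => //.
  by split; [exact: walk_ok_rev|rewrite walk_len_rev; lra].
by right; exists e, t', t; rewrite distrC.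
Qed.

Lemma path_lengths_concat {x y z l1 l2} : gvalid y ->
  path_lengths x y l1 -> path_lengths y z l2 ->
  exists2 l, path_lengths x z l & l <= l1 + l2.
Proof.
move=> vy [[a [b [s1 [ax [yb [ws1 ->]]]]]]|[e [t [t' [-> [-> ->]]]]]]
  [[b' [c [s2 [yb' [zc [ws2 ->]]]]]]|[e' [t1 [t2 [ey [-> ->]]]]]].
- have [s ws ls] := gexits_walk vy yb yb'.
  exists (a.2 + walk_len (s1 ++ s ++ s2) + c.2).
    left; exists a, c, (s1 ++ s ++ s2); do 2!split => //; split => //.
    by apply: walk_ok_cat ws1 _; apply: walk_ok_cat ws ws2.
  by rewrite !walk_len_cat; lra.
- rewrite {}ey in yb; have [c zc [cb lc]] := gexits_shift t2 yb.
  by exists (a.2 + walk_len s1 + c.2); [left; exists a, c, s1; rewrite cb|lra].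
- have [a xa [ab la]] := gexits_shift t yb'.
  exists (a.2 + walk_len s2 + c.2); first by left; exists a, c, s2; rewrite ab.
  by move: la; rewrite distrC; lra.
- case: ey => <- <-; exists `|t - t2|; first by right; exists e, t, t2.
  exact: ler_distD.
Qed.

Lemma gdist_le_path {x y l} :
  gvalid x -> gvalid y -> path_lengths x y l -> gdist x y <= l.
Proof.
by move=> vx vy; apply: ge_inf; exists 0 => l'; apply: path_lengths_ge0.
Qed.

Lemma lb_le_gdist x y c :
  (forall l, path_lengths x y l -> c <= l) -> c <= gdist x y.
Proof. by apply: lb_le_inf; apply: path_lengths_nonempty. Qed.

Lemma gdist_ge0 x y : gvalid x -> gvalid y -> 0 <= gdist x y.
Proof. by move=> vx vy; apply: lb_le_gdist => l; apply: path_lengths_ge0. Qed.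

Lemma gdistxx x : gvalid x -> gdist x x = 0.
Proof.
move=> vx; apply/le_anti; rewrite gdist_ge0 // andbT; apply: gdist_le_path => //.
case: x vx => [v|e t] _; last by right; exists e, t, t; rewrite subrr normr0.
by left; exists (v, 0), (v, 0), [::]; rewrite !inE eqxx walk_len_nil !addr0.
Qed.

Lemma gdistC x y : gdist x y = gdist y x.
Proof. by congr inf; apply/seteqP; split => l; apply: path_lengthsC. Qed.

Lemma gdist_triangle {x y z} : gvalid x -> gvalid y -> gvalid z ->
  gdist x z <= gdist x y + gdist y z.
Proof.
move=> vx vy vz.
have le_sum l1 l2 : path_lengths x y l1 -> path_lengths y z l2 ->
    gdist x z - l2 <= l1.
  move=> xy yz; have [l xz le_l] := path_lengths_concat vy xy yz.
  by have := gdist_le_path vx vz xz; lra.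
have : gdist x z - gdist y z <= gdist x y.
  apply: lb_le_gdist => l1 xy; suff : gdist x z - l1 <= gdist y z by lra.
  by apply: lb_le_gdist => l2 yz; have := le_sum _ _ xy yz; lra.
lra.
Qed.

Lemma gdist_quadrangle {x x' y y'} :
  gvalid x -> gvalid x' -> gvalid y -> gvalid y' ->
  gdist x y <= gdist x x' + gdist x' y' + gdist y' y.
Proof.
move=> vx vx' vy vy'.
have := gdist_triangle vx vx' vy; have := gdist_triangle vx' vy' vy; lra.
Qed.

Local Notation gcauchy := (gcauchy G).
Local Notation cdist := (cdist G).

Lemma gcauchy_cst {x} : gvalid x -> gcauchy (fun _ => x).
Proof. by move=> vx; split => // e e0; exists 0%N => m n _ _; rewrite gdistxx. Qed.

Lemma gdist_seq_cvg u w : gcauchy u -> gcauchy w ->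
  cvgn (fun n => gdist (u n) (w n) : R^o).
Proof.
move=> [vu cu] [vw cw]; apply/cauchy_cvgP; apply: cauchy_exP => e e0.
have e2 : 0 < e / 2 by rewrite divr_gt0.
have [[Nu hu] [Nw hw]] := (cu _ e2, cw _ e2); set N := maxn Nu Nw.
have [leNu leNw] : (Nu <= N)%N /\ (Nw <= N)%N by rewrite leq_maxl leq_maxr.
exists (gdist (u N) (w N) : R^o); exists N => // n /= leNn.
have [Nun Nwn] : (Nu <= n)%N /\ (Nw <= n)%N by split; apply: leq_trans leNn.
have := hu _ _ leNu Nun; have := hu _ _ Nun leNu.
have := hw _ _ leNw Nwn; have := hw _ _ Nwn leNw.
have := gdist_quadrangle (vu N) (vu n) (vw N) (vw n).
have := gdist_quadrangle (vu n) (vu N) (vw n) (vw N).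
by rewrite /ball /= ltr_norml; lra.
Qed.

Lemma cdist_triangle {u v w} : gcauchy u -> gcauchy v -> gcauchy w ->
  cdist u w <= cdist u v + cdist v w.
Proof.
move=> cu cv cw; rewrite /cdist -limD; [|exact: gdist_seq_cvg..].
apply: ler_lim; [exact: gdist_seq_cvg|by apply: is_cvgD; exact: gdist_seq_cvg|].
by apply: nearW => n; apply: gdist_triangle; [exact: cu.1|exact: cv.1|exact: cw.1].
Qed.

Lemma cdistC u w : cdist u w = cdist w u.
Proof. by rewrite /cdist; under eq_fun do rewrite gdistC. Qed.

Lemma cdist_cst x y : cdist (fun _ => x) (fun _ => y) = gdist x y.
Proof. by rewrite /cdist lim_cst. Qed.

Lemma cdistxx w : gcauchy w -> cdist w w = 0.
Proof.
by move=> [vw _]; rewrite /cdist; under eq_fun do rewrite gdistxx //; rewrite lim_cst.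
Qed.

Local Notation on_closed_edge := (on_closed_edge G).

Lemma on_closed_edge_valid {e x} : on_closed_edge e x -> gvalid x.
Proof. by case=> [->|[->|[t [-> ?]]]]. Qed.

Lemma gexits_on_closed_edge {e x b} : on_closed_edge e x -> b \in gexits x ->
  b.1 = src e \/ b.1 = tgt e.
Proof.
case=> [->|[->|[t [-> _]]]]; rewrite !inE; first by move/eqP->; left.
  by move/eqP->; right.
by case/orP=> /eqP->; [left|right].
Qed.

Lemma seq_len_lb (s : seq E) :
  exists2 r : R, 0 < r & forall e, e \in s -> r <= len e.
Proof.
elim: s => [|e s [r r0 le_r]]; first by exists 1.
exists (Num.min r (len e)); first by rewrite lt_min r0 mg_len_pos.
move=> e'; rewrite inE => /orP[/eqP->|/le_r]; first by rewrite ge_min lexx orbT.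
by rewrite ge_min => ->.
Qed.

Lemma finite_set_len_lb {S : set E} : finite_set S ->
  exists2 r : R, 0 < r & forall e, S e -> r <= len e.
Proof. by move=> /finite_fsetP[X ->]; apply: seq_len_lb. Qed.

(* A path leaving the vertex v towards an edge not incident to v starts with
   an edge incident to v, so its length is at least the shortest such edge. *)
Lemma gdist_vertex_nonincident v : exists2 r : R, 0 < r &
  forall e x, on_closed_edge e x -> ~ (src e = v \/ tgt e = v) ->
    r <= gdist (GV v) x.
Proof.
have [r r0 le_r] := finite_set_len_lb (mg_locfin v).
exists r => // e x ex not_inc; apply: lb_le_gdist => l.
move=> [[a [b [s [+ [xb [+ ->]]]]]]|[? [? [? []]]]] //.
rewrite inE => /eqP-> /= ws; have b0 := gexits_ge0 (on_closed_edge_valid ex) xb.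
case: s ws => [|[e' o] s] /= ws.
  case: not_inc; rewrite ws.
  by case: (gexits_on_closed_edge ex xb) => ->; [left|right].
have inc : src e' = v \/ tgt e' = v by case: o ws => /= -[<- _]; [left|right].
have := le_r _ inc; have := walk_len_ge0 s; rewrite walk_len_cons /=; lra.
Qed.

Lemma gdist_edge_point_other_edge {e0 t e x} : 0 < t < len e0 ->
  on_closed_edge e x -> e <> e0 -> Num.min t (len e0 - t) <= gdist (GE e0 t) x.
Proof.
move=> /andP[t0 tl] ex ne; apply: lb_le_gdist => l.
move=> [[a [b [s [xa [xb [_ ->]]]]]]|[e1 [t1 [t2 [[<- _] [xE _]]]]]].
  have : Num.min t (len e0 - t) <= a.2.
    by move: xa; rewrite !inE => /orP[] /eqP-> /=; rewrite ge_min lexx ?orbT.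
  have := gexits_ge0 (on_closed_edge_valid ex) xb; have := walk_len_ge0 s; lra.
by case: ex xE => [->|[->|[t' [-> _]]]] // -[].
Qed.

Definition near_edges_in (p : pt) (r : R) (F : set E) : Prop :=
  forall e x, on_closed_edge e x -> gdist p x < r -> F e.

Lemma locally_finite_edges p : gvalid p ->
  exists r F, [/\ 0 < r, finite_set F & near_edges_in p r F].
Proof.
case: p => [v|e0 t] vp.
  have [r r0 far] := gdist_vertex_nonincident v.
  exists r, [set e | src e = v \/ tgt e = v]; split => // [|e x ex lt_r].
    exact: mg_locfin.
  by apply: contrapT => /(far _ _ ex); rewrite leNgt lt_r.
have /andP[t0 tl] := vp.
exists (Num.min t (len e0 - t)), [set e0].
split; [by rewrite lt_min t0 subr_gt0|exact: finite_set1|move=> e x ex lt_r].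
by apply: contrapT => /(gdist_edge_point_other_edge vp ex); rewrite leNgt lt_r.
Qed.

Local Notation copen := (copen G).
Local Notation cboundary := (cboundary G).

Definition cball (p : pt) (r : R) : set (nat -> pt) :=
  [set w | cdist (fun _ => p) w < r].

Definition boundary_nbhd (eps : R) : set (nat -> pt) :=
  [set w | exists2 u, cboundary u & cdist u w < eps].

Lemma copen_cball {p} r : gvalid p -> copen (cball p r).
Proof.
move=> vp u cu pu; exists (r - cdist (fun _ => p) u); first by rewrite subr_gt0.
move=> w cw uw; have := cdist_triangle (gcauchy_cst vp) cu cw.
by rewrite /cball /=; lra.
Qed.

Lemma copen_boundary_nbhd eps : copen (boundary_nbhd eps).
Proof.
move=> u cu [b bb bu]; exists (eps - cdist b u); first by rewrite subr_gt0.
by move=> w cw uw; exists b => //; have := cdist_triangle bb.1 cu cw; lra.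
Qed.

Lemma not_cboundary_int {w} : gcauchy w -> ~ cboundary w ->
  exists p, gint G p /\ cdist w (fun _ => p) = 0.
Proof. by move=> cw wNb; apply: contrapT => wNint; apply: wNb. Qed.

Lemma completion_compact_ball_cover (r : pt -> R) eps :
  completion_compact G -> 0 < eps -> (forall p, gvalid p -> 0 < r p) ->
  exists P : set pt, [/\ finite_set P, P `<=` gvalid &
    forall x, gvalid x -> dist_bnd_ge G x eps -> exists2 p, P p & gdist p x < r p].
Proof.
move=> cc eps0 r_gt0.
pose O (i : option pt) :=
  if i is Some p then [set w | gvalid p /\ cball p (r p) w] else boundary_nbhd eps.
have O_open i : copen (O i).
  case: i => [p|]; last exact: copen_boundary_nbhd.
  move=> u cu [vp pu]; have [s s0 sub] := copen_cball (r p) vp _ cu pu.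
  by exists s => // w cw /(sub _ cw).
have O_cover w : gcauchy w -> exists i, O i w.
  move=> cw; have [wb|/(not_cboundary_int cw)[p [ip wp]]] := pselect (cboundary w).
    by exists None; exists w; rewrite ?cdistxx.
  exists (Some p); split; first exact: ip.1.
  by rewrite /cball /= cdistC wp; apply: r_gt0 ip.1.
have [J [finJ J_cover]] := cc _ O O_open O_cover.
exists (Some @^-1` J `&` gvalid); split; last 1 first.
- move=> x vx far; have [[p|] [Ji Ox]] := J_cover _ (gcauchy_cst vx).
    by case: Ox => vp; rewrite /cball /= cdist_cst; exists p.
  by case: Ox => u bu ux; have := far u bu; rewrite cdistC; lra.
- by apply/finite_setIl/finite_preimage => // ? ? _ _ [].
- exact: subIsetr.
Qed.

End MetricGraph.

Theorem lemma2p3 (R : realType) (G : metric_graph R) :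
  completion_compact G ->
  forall eps : R, 0 < eps ->
    finite_set (eps_edges G eps) /\ finite_set (eps_vertices G eps).
Proof.
move=> cc eps eps0.
have /choice[rF rF_spec] p : exists rF : R * set (mg_E G), gvalid G p ->
    [/\ 0 < rF.1, finite_set rF.2 & near_edges_in p rF.1 rF.2].
  have [/locally_finite_edges[r [F rF]]|nvp] := pselect (gvalid G p).
    by exists (r, F).
  by exists (1, set0) => /nvp.
have rF_gt0 p : gvalid G p -> 0 < (rF p).1 by case/rF_spec.
have [P [finP P_valid P_cover]] :=
  completion_compact_ball_cover (fun p => (rF p).1) _ cc eps0 rF_gt0.
have fin_edges : finite_set (eps_edges G eps).
  apply: (sub_finite_set (B := \bigcup_(p in P) (rF p).2)).
    move=> e [x [ex far]].
    have [p Pp px] := P_cover x (on_closed_edge_valid ex) far.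
    have [_ _ near_p] := rF_spec p (P_valid p Pp).
    by exists p => //; exact: near_p ex px.
  by apply: bigcup_finite => // p /P_valid /rF_spec[].
split => //; apply: (sub_finite_set
  (B := @mg_src _ G @` eps_edges G eps `|` @mg_tgt _ G @` eps_edges G eps)).
  by move=> v [e [ee [<-|<-]]]; [left|right]; exists e.
by rewrite finite_setU; split; apply: finite_image.
Qed.
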